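(* Let $\alpha_1,\dots,\alpha_5\le0$ be integers, let $r:=-(\alpha_1+\cdots+\alpha_5)$, let $a$ be an integer with $0\le a\le r$ and $b\in\mathbb Z$. Then $J_{11}^a\,q^b\,\tilde P_1^{\alpha_1}\tilde P_2^{\alpha_2}\tilde P_3^{\alpha_3}\tilde P_4^{\alpha_4}\tilde P_5^{\alpha_5}$ has all (Laurent) coefficients non-negative.
   Context: $(x;q)_\infty=\prod_{i\ge0}(1-xq^i)$; $J_{11}:=(q^{11};q^{11})_\infty$; $\tilde P_a:=(q^a;q^{11})_\infty(q^{11-a};q^{11})_\infty$ for $1\le a\le 5$. *)

(* Formal power series in q with integer coefficients are
   handled through their truncations: the coefficient of q^n of a product
   of the series below only depends on the factors and terms of degree <= n,
   so we compute it inside {poly int} from truncations at order n. *)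
From HB Require Import structures.
From mathcomp Require Import all_boot all_order all_algebra.
Set Implicit Arguments. Unset Strict Implicit. Unset Printing Implicit Defensive.
Import Order.TTheory GRing.Theory Num.Theory.
Local Open Scope ring_scope.

(* truncation at degree N of 1/(1 - q^k), valid for k >= 1 *)
Definition geom_trunc (k N : nat) : {poly int} := \sum_(j < N.+1) 'X^(k * j).

(* (q^s; q^11)_oo, keeping all factors that can affect degrees <= N (s >= 1) *)
Definition poch_trunc (s N : nat) : {poly int} :=
  \prod_(i < N.+1) (1 - 'X^(s + 11 * i)).

(* truncation of 1/(q^s; q^11)_oo = prod_i 1/(1 - q^(s+11 i)), s >= 1 *)
Definition poch_inv_trunc (s N : nat) : {poly int} :=
  \prod_(i < N.+1) geom_trunc (s + 11 * i) N.

(* J_11 = (q^11;q^11)_oo *)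
Definition J11_trunc (N : nat) : {poly int} := poch_trunc 11 N.

(* 1 / Ptilde_a = 1 / ((q^a;q^11)_oo (q^(11-a);q^11)_oo), 1 <= a <= 5 *)
Definition Ptilde_inv_trunc (a N : nat) : {poly int} :=
  poch_inv_trunc a N * poch_inv_trunc (11 - a) N.

(* coefficient of q^n in the power series
   J_11^a * Ptilde_1^(-e1) * ... * Ptilde_5^(-e5)  (e_i >= 0) *)
Definition series_coef (a e1 e2 e3 e4 e5 n : nat) : int :=
  ((J11_trunc n) ^+ a * (Ptilde_inv_trunc 1 n) ^+ e1 * (Ptilde_inv_trunc 2 n) ^+ e2
   * (Ptilde_inv_trunc 3 n) ^+ e3 * (Ptilde_inv_trunc 4 n) ^+ e4
   * (Ptilde_inv_trunc 5 n) ^+ e5)`_n.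

Definition laurent_coef (a : nat) (b : int) (al1 al2 al3 al4 al5 : int) (m : int)
  : int :=
  if (0 <= m - b) then
    series_coef a `|al1|%N `|al2|%N `|al3|%N `|al4|%N `|al5|%N `|m - b|%N
  else 0.

From mathcomp Require Import all_boot all_order all_algebra.
From mathcomp Require Import ring zify.
Set Implicit Arguments. Unset Strict Implicit.
Import Order.TTheory GRing.Theory Num.Theory.
Local Open Scope ring_scope.

(* The heart of the proof is the q-binomial theorem (in base q^11)
     (q^(t+s); q^11)_oo / ((q^s; q^11)_oo (q^t; q^11)_oo)
        = sum_k q^(s k) / ((q^11; q^11)_k (q^(t+11k); q^11)_oo),
   whose right-hand side visibly has non-negative coefficients.  We prove it
   up to N by showing that both sides satisfy the same recursion s -> s + 11
   and agree with 1/(q^t; q^11)_oo once s > N.  Taking s = c and t = 11 - c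
   gives that J_11 / Ptilde_c has non-negative coefficients for 1 <= c <= 10.
   Finally, since a <= e1 + ... + e5, the product J_11^a Ptilde_1^(-e1) ...
   Ptilde_5^(-e5) splits into a factors J_11 / Ptilde_c times a product of
   the non-negative series 1/Ptilde_c; the shift q^b only moves indices. *)

Section Agreement.
Variable N : nat.

Definition agree (p q : {poly int}) := forall i, (i <= N)%N -> p`_i = q`_i.

Definition nonneg_upto (p : {poly int}) := forall i, (i <= N)%N -> 0 <= p`_i.

Lemma agree_sym p q : agree p q -> agree q p.
Proof. by move=> hpq i hi; rewrite hpq. Qed.

Lemma agree_trans p q r : agree p q -> agree q r -> agree p r.
Proof. by move=> hpq hqr i hi; rewrite hpq ?hqr. Qed.

Lemma agreeD p1 q1 p2 q2 : agree p1 q1 -> agree p2 q2 -> agree (p1 + p2) (q1 + q2).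
Proof. by move=> h1 h2 i hi; rewrite !coefD h1 ?h2. Qed.

Lemma agreeN p q : agree p q -> agree (- p) (- q).
Proof. by move=> hpq i hi; rewrite !coefN hpq. Qed.

(* the coefficient of degree i of a product only involves degrees <= i *)
Lemma agreeM p1 q1 p2 q2 : agree p1 q1 -> agree p2 q2 -> agree (p1 * p2) (q1 * q2).
Proof.
move=> h1 h2 i hi; rewrite !coefM; apply: eq_bigr => j _.
rewrite h1 ?h2 //; first exact: leq_trans (leq_subr _ _) hi.
exact: leq_trans (leq_ord j) hi.
Qed.

Lemma agreeMl c p q : agree p q -> agree (c * p) (c * q).
Proof. exact: agreeM. Qed.

Lemma agree_sum (I : Type) (r : seq I) (P : pred I) (F G : I -> {poly int}) :
  (forall i, P i -> agree (F i) (G i)) ->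
  agree (\sum_(i <- r | P i) F i) (\sum_(i <- r | P i) G i).
Proof. by move=> h; apply: (big_ind2 agree) => // *; apply: agreeD. Qed.

Lemma agree_prod (I : Type) (r : seq I) (P : pred I) (F G : I -> {poly int}) :
  (forall i, P i -> agree (F i) (G i)) ->
  agree (\prod_(i <- r | P i) F i) (\prod_(i <- r | P i) G i).
Proof. by move=> h; apply: (big_ind2 agree) => // *; apply: agreeM. Qed.

Lemma agreeX_big m : (N < m)%N -> agree 'X^m 0.
Proof.
by move=> hm i hi; rewrite coefXn coef0; case: eqP => // ei; lia.
Qed.

Lemma agree_1subX_big m : (N < m)%N -> agree (1 - 'X^m) 1.
Proof. by move=> hm i hi; rewrite coefB agreeX_big // coef0 subr0. Qed.

Lemma nonneg_upto_agree p q : nonneg_upto q -> agree p q -> nonneg_upto p.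
Proof. by move=> hq hpq i hi; rewrite hpq ?hq. Qed.

Lemma nonneg_uptoD p q : nonneg_upto p -> nonneg_upto q -> nonneg_upto (p + q).
Proof. by move=> hp hq i hi; rewrite coefD addr_ge0 ?hp ?hq. Qed.

Lemma nonneg_uptoM p q : nonneg_upto p -> nonneg_upto q -> nonneg_upto (p * q).
Proof.
move=> hp hq i hi; rewrite coefM; apply: sumr_ge0 => j _.
apply: mulr_ge0; first exact/hp/(leq_trans (leq_ord j) hi).
exact/hq/(leq_trans (leq_subr _ _) hi).
Qed.

Lemma nonneg_upto_sum (I : Type) (r : seq I) (P : pred I) (F : I -> {poly int}) :
  (forall i, P i -> nonneg_upto (F i)) -> nonneg_upto (\sum_(i <- r | P i) F i).
Proof.
move=> h; apply: (big_ind nonneg_upto) => //; last exact: nonneg_uptoD.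
by move=> i _; rewrite coef0.
Qed.

Lemma nonneg_upto1 : nonneg_upto 1.
Proof. by move=> i _; rewrite coef1; case: (i == 0)%N. Qed.

Lemma nonneg_upto_prod (I : Type) (r : seq I) (P : pred I) (F : I -> {poly int}) :
  (forall i, P i -> nonneg_upto (F i)) -> nonneg_upto (\prod_(i <- r | P i) F i).
Proof.
move=> h; apply: (big_ind nonneg_upto) => //; [exact: nonneg_upto1|exact: nonneg_uptoM].
Qed.

Lemma nonneg_uptoX m : nonneg_upto 'X^m.
Proof. by move=> i _; rewrite coefXn; case: (i == m). Qed.

Lemma agree_prod1 (I : Type) (r : seq I) (F : I -> {poly int}) :
  (forall i, agree (F i) 1) -> agree (\prod_(i <- r) F i) 1.
Proof.
move=> h; apply: (agree_trans (q := \prod_(i <- r) 1)); first exact: agree_prod.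
by rewrite big1.
Qed.

(* peeling off the first factor of the product prod_(i <= N) G (s + d i)
   leaves the same product started at s + d, up to its extra last factor
   G (s + d (N+1)), which is assumed to be 1 modulo 'X^(N.+1) *)
Lemma agree_prod_step (G : nat -> {poly int}) (d s : nat) :
  agree (G (s + d * N.+1)%N) 1 ->
  agree (\prod_(i < N.+1) G (s + d * i)%N)
        (G s * \prod_(i < N.+1) G (s + d + d * i)%N).
Proof.
move=> hlast; rewrite big_ord_recl big_ord_recr /= muln0 addn0.
apply: agreeMl; rewrite -[X in agree X _]mulr1.
have -> : \prod_(i < N) G (s + d * bump 0 i)%N = \prod_(i < N) G (s + d + d * i)%N.
  by apply: eq_bigr => i _; rewrite /bump /= add1n mulnS addnA.
by apply: agreeMl; apply: agree_sym; rewrite -addnA -mulnS.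
Qed.

Lemma geom_truncK m : (0 < m)%N -> agree ((1 - 'X^m) * geom_trunc m N) 1.
Proof.
move=> hm; have -> : (1 - 'X^m) * geom_trunc m N = 1 - 'X^m ^+ N.+1.
  rewrite /geom_trunc; under eq_bigr do rewrite exprM.
  by rewrite -opprB mulNr -subrX1 opprB.
by rewrite -exprM; apply: agree_1subX_big; rewrite leq_pmull.
Qed.

Lemma geom_truncKl m p : (0 < m)%N -> agree ((1 - 'X^m) * (geom_trunc m N * p)) p.
Proof.
move=> hm; rewrite mulrA -[X in agree _ X]mul1r.
by apply: agreeM; [exact: geom_truncK|].
Qed.

Lemma geom_trunc_big m : (N < m)%N -> agree (geom_trunc m N) 1.
Proof.
move=> hm; have hm0 : (0 < m)%N by lia.
rewrite -[geom_trunc _ _]mul1r; apply: agree_trans (geom_truncK hm0).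
by apply: agreeM; [exact/agree_sym/agree_1subX_big|].
Qed.

Lemma poch_trunc_shift s :
  agree (poch_trunc s N) ((1 - 'X^s) * poch_trunc (s + 11) N).
Proof.
by apply: (@agree_prod_step (fun m => 1 - 'X^m) 11); apply: agree_1subX_big; lia.
Qed.

Lemma poch_inv_trunc_shift s :
  agree (poch_inv_trunc s N) (geom_trunc s N * poch_inv_trunc (s + 11) N).
Proof.
by apply: (@agree_prod_step (geom_trunc ^~ N) 11); apply: geom_trunc_big; lia.
Qed.

Lemma poch_trunc_big s : (N < s)%N -> agree (poch_trunc s N) 1.
Proof. by move=> hs; apply: agree_prod1 => i; apply: agree_1subX_big; lia. Qed.

Lemma poch_inv_trunc_big s : (N < s)%N -> agree (poch_inv_trunc s N) 1.
Proof. by move=> hs; apply: agree_prod1 => i; apply: geom_trunc_big; lia. Qed.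

Lemma nonneg_upto_poch_inv s : nonneg_upto (poch_inv_trunc s N).
Proof.
by apply: nonneg_upto_prod => i _; apply: nonneg_upto_sum => j _; apply: nonneg_uptoX.
Qed.

End Agreement.

Section QBinomial.
Variables (N t : nat).
Hypothesis t_gt0 : (0 < t)%N.

Local Notation agree := (agree N).

Definition qbin_lhs (s : nat) : {poly int} :=
  poch_trunc (t + s) N * poch_inv_trunc s N * poch_inv_trunc t N.

(* 1 / ((q^11; q^11)_k (q^(t+11k); q^11)_oo) *)
Definition qbin_term (k : nat) : {poly int} :=
  (\prod_(j < k) geom_trunc (11 * j.+1) N) * poch_inv_trunc (t + 11 * k) N.

Definition qbin_rhs (s : nat) : {poly int} :=
  \sum_(k < N.+1) 'X^(s * k) * qbin_term k.

Lemma nonneg_upto_qbin_rhs s : nonneg_upto N (qbin_rhs s).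
Proof.
apply: nonneg_upto_sum => k _; apply: nonneg_uptoM; first exact: nonneg_uptoX.
apply: nonneg_uptoM; last exact: nonneg_upto_poch_inv.
by apply: nonneg_upto_prod => j _; apply: nonneg_upto_sum => i _; apply: nonneg_uptoX.
Qed.

(* both sides equal prod_(j<k) 1/(1 - q^(11(j+1))) * 1/(q^(t+11k+11); q^11)_oo *)
Lemma qbin_term_rec k :
  agree ((1 - 'X^(11 * k.+1)) * qbin_term k.+1)
        ((1 - 'X^(t + 11 * k)) * qbin_term k).
Proof.
have shift : (t + 11 * k.+1 = t + 11 * k + 11)%N by lia.
rewrite /qbin_term big_ord_recr /= shift.
set A := \prod_(j < k) _; set P := poch_inv_trunc (t + 11 * k + 11) N.
have -> : A * geom_trunc (11 * k.+1) N * P = geom_trunc (11 * k.+1) N * (A * P).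
  by rewrite -mulrA mulrCA.
apply: agree_trans (geom_truncKl _ _) _; first by lia.
apply: agree_sym; rewrite mulrCA; apply: agreeMl.
apply: (agree_trans (agreeMl _ (poch_inv_trunc_shift _))).
by apply: geom_truncKl; lia.
Qed.

(* the right-hand side satisfies the recursion of the left-hand side:
   multiplying by 1 - q^s telescopes the sum *)
Lemma qbin_rhs_rec s : (0 < s)%N ->
  agree ((1 - 'X^s) * qbin_rhs s) ((1 - 'X^(t + s)) * qbin_rhs (s + 11)).
Proof.
move=> s_gt0.
suff hD : agree ((1 - 'X^s) * qbin_rhs s - (1 - 'X^(t + s)) * qbin_rhs (s + 11)) 0.
  by move=> i hi; apply/eqP; rewrite -subr_eq0 -coefB hD // coef0.
pose u k := 'X^(s * k) * ((1 - 'X^(11 * k)) * qbin_term k).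
have expand : (1 - 'X^s) * qbin_rhs s - (1 - 'X^(t + s)) * qbin_rhs (s + 11) =
    \sum_(k < N.+1) (u k - 'X^(s * k.+1) * ((1 - 'X^(t + 11 * k)) * qbin_term k)).
  rewrite /qbin_rhs !mulr_sumr -sumrB; apply: eq_bigr => k _.
  by rewrite /u mulnS mulnDl !exprD; ring.
have telescope : \sum_(k < N.+1) (u k - u k.+1) = - u N.+1.
  rewrite -(big_mkord xpredT (fun k => u k - u k.+1)).
  under eq_bigr do rewrite -opprB.
  by rewrite sumrN telescope_sumr // /u !muln0 expr0 subrr !mul0r mulr0 subr0.
rewrite expand; apply: agree_trans (_ : agree _ (- u N.+1)) _.
  rewrite -telescope; apply: agree_sum => k _; apply: agreeD => //.
  by apply/agreeN/agreeMl/agree_sym/qbin_term_rec.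
have vanish : (N < s * N.+1)%N by rewrite leq_pmull.
move=> i hi; rewrite coefN /u coefXnM coef0 ifT ?oppr0 //.
exact: leq_ltn_trans hi vanish.
Qed.

Lemma qbin_lhs_rec s :
  agree (qbin_lhs s) (geom_trunc s N * (1 - 'X^(t + s)) * qbin_lhs (s + 11)).
Proof.
apply: (agree_trans (q := (1 - 'X^(t + s)) * poch_trunc (t + s + 11) N *
           (geom_trunc s N * poch_inv_trunc (s + 11) N) * poch_inv_trunc t N)).
  by apply: agreeM => //; apply: agreeM; [exact: poch_trunc_shift|exact: poch_inv_trunc_shift].
have -> : forall A B C D E : {poly int}, A * B * (C * D) * E = C * A * (B * D * E).
  by move=> *; ring.
by rewrite /qbin_lhs addnA.
Qed.

Lemma qbin_lhs_big s : (N < s)%N -> agree (qbin_lhs s) (poch_inv_trunc t N).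
Proof.
move=> hs; apply: (agree_trans (q := 1 * 1 * poch_inv_trunc t N)); last by rewrite !mul1r.
by apply: agreeM => //; apply: agreeM; [apply: poch_trunc_big|apply: poch_inv_trunc_big]; lia.
Qed.

Lemma qbin_rhs_big s : (N < s)%N -> agree (qbin_rhs s) (poch_inv_trunc t N).
Proof.
move=> hs; rewrite /qbin_rhs big_ord_recl muln0 expr0 mul1r.
have -> : qbin_term 0 = poch_inv_trunc t N.
  by rewrite /qbin_term big_ord0 mul1r muln0 addn0.
rewrite -[X in agree _ X]addr0; apply: agreeD => //.
apply: (agree_trans (q := \sum_(i < N) 0 * qbin_term (bump 0 i))).
  by apply: agree_sum => i _; apply: agreeM => //; apply: agreeX_big;
     exact: leq_trans hs (leq_pmulr s (ltn0Sn i)).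
by rewrite big1 // => i _; rewrite mul0r.
Qed.

(* the q-binomial theorem, modulo q^(N+1), by induction on the number of
   steps s -> s + 11 needed to exceed N *)
Lemma qbin_identity s : (0 < s)%N -> agree (qbin_lhs s) (qbin_rhs s).
Proof.
suff: forall k s, (0 < s)%N -> (N < s + 11 * k)%N -> agree (qbin_lhs s) (qbin_rhs s).
  by move=> gen s_gt0; apply: (gen N) => //; lia.
elim=> [|k IH] {}s s_gt0 hN.
  by apply: agree_trans (qbin_lhs_big _) (agree_sym (qbin_rhs_big _)); lia.
apply: (agree_trans (qbin_lhs_rec s)).
apply: (agree_trans (agreeMl _ (IH (s + 11)%N _ _))); try lia.
rewrite -mulrA; apply: (agree_trans (agreeMl _ (agree_sym (qbin_rhs_rec s_gt0)))).
by rewrite mulrCA; apply: geom_truncKl.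
Qed.

End QBinomial.

(* J_11 / Ptilde_c has non-negative coefficients for 1 <= c <= 10: it is the
   q-binomial identity with s = c and t = 11 - c *)
Lemma nonneg_upto_J11_Ptilde N c : (0 < c < 11)%N ->
  nonneg_upto N (J11_trunc N * Ptilde_inv_trunc c N).
Proof.
case/andP=> c_gt0 c_lt11; have t_gt0 : (0 < 11 - c)%N by rewrite subn_gt0.
apply: nonneg_upto_agree (nonneg_upto_qbin_rhs (N := N) (11 - c) c) _.
have := qbin_identity (N := N) t_gt0 c_gt0.
by rewrite /qbin_lhs subnK ?(ltnW c_lt11) // /J11_trunc /Ptilde_inv_trunc mulrA.
Qed.

(* 1/Ptilde_c is a product of geometric series *)
Lemma nonneg_upto_Ptilde N c : nonneg_upto N (Ptilde_inv_trunc c N).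
Proof. by apply: nonneg_uptoM; apply: nonneg_upto_poch_inv. Qed.

(* if x * y and y are non-negative for every y in ys, then so is
   x ^+ a * prod ys as long as a <= size ys: pair each x with some y *)
Lemma nonneg_upto_paired N (x : {poly int}) (ys : seq {poly int}) (a : nat) :
  (forall y, y \in ys -> nonneg_upto N (x * y) /\ nonneg_upto N y) ->
  (a <= size ys)%N -> nonneg_upto N (x ^+ a * \prod_(y <- ys) y).
Proof.
elim: ys a => [|y ys IH] [|a] hys ha //.
1,2: by rewrite expr0 mul1r big_seq; apply: nonneg_upto_prod => z /hys [].
rewrite big_cons exprS mulrACA; apply: nonneg_uptoM; first by case: (hys y (mem_head _ _)).
by apply: IH => // z hz; apply: hys; rewrite in_cons hz orbT.
Qed.

Lemma prod_nseq (R : pzSemiRingType) (x : R) n : \prod_(y <- nseq n x) y = x ^+ n.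
Proof. by rewrite big_nseq; elim: n => [|n /= ->]; rewrite ?exprS. Qed.

Lemma series_coef_nonneg a e1 e2 e3 e4 e5 n :
  (a <= e1 + e2 + e3 + e4 + e5)%N -> 0 <= series_coef a e1 e2 e3 e4 e5 n.
Proof.
move=> ha; rewrite /series_coef.
set P := Ptilde_inv_trunc ^~ n.
set ys := nseq e1 (P 1) ++ nseq e2 (P 2) ++ nseq e3 (P 3) ++ nseq e4 (P 4) ++ nseq e5 (P 5).
have -> : J11_trunc n ^+ a * P 1 ^+ e1 * P 2 ^+ e2 * P 3 ^+ e3 * P 4 ^+ e4 * P 5 ^+ e5
    = J11_trunc n ^+ a * \prod_(y <- ys) y by rewrite !big_cat !prod_nseq !mulrA.
apply: nonneg_upto_paired (leqnn n); last by rewrite !size_cat !size_nseq; lia.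
move=> y; rewrite !mem_cat !mem_nseq.
by case/orP=> [|/orP[|/orP[|/orP[|]]]] /andP[_ /eqP ->];
  (split; [apply: nonneg_upto_J11_Ptilde | apply: nonneg_upto_Ptilde]).
Qed.

Theorem lemma6p2 (al1 al2 al3 al4 al5 : int) (a : nat) (b : int) :
  al1 <= 0 -> al2 <= 0 -> al3 <= 0 -> al4 <= 0 -> al5 <= 0 ->
  (a%:Z <= - (al1 + al2 + al3 + al4 + al5)) ->
  forall m : int, 0 <= laurent_coef a b al1 al2 al3 al4 al5 m.
Proof.
move=> h1 h2 h3 h4 h5 ha m; rewrite /laurent_coef; case: ifP => // _.
by apply: series_coef_nonneg; lia.
Qed.
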